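(* Fix integers $T_0\ge 1$ and $t\ge 1$, real parameters $\beta_0,\beta_A$, nonnegative lag weights $g_1,g_2,\dots$ and $\pi_1,\pi_2,\dots$, ascertainment rates $\alpha_1,\dots,\alpha_t$, and a fixed intervention sequence $a_{-T_0+1},\dots,a_0,a_1,\dots,a_t$. Let the seeding values be deterministic: $I_s=0$ for $s\le -T_0$ and $I_s$ given (e.g. $I_s=e^{\mu}$) for $s=-T_0+1,\dots,0$, and write $\bar I_0=(I_{-T_0+1},\dots,I_0)^\top$. Let $I_r(\bar a_r)$, $Y_r(\bar a_r)$, $r=1,\dots,t$, be the counterfactual infection and outcome processes under the intervention fixing $A_s=a_s$ for all $s$, with integrable values, satisfying (with $I_s(\bar a_s):=I_s$ for $s\le 0$) for each $r=1,\dots,t$: \[ \mathbb{E}\big[I_r(\bar a_r)\,\big|\,I_s(\bar a_s),\,s<r;\ Y_s(\bar a_s),\,s<r\big]=\sum_{s<r} e^{\beta_0+\beta_A a_s}\, g_{r-s}\, I_s(\bar a_s)\quad\text{(exponential model)}, \] \[ \mathbb{E}\big[Y_r(\bar a_r)\,\big|\,I_s(\bar a_s),\,s\le r;\ Y_s(\bar a_s),\,s<r\big]=\alpha_r\sum_{s<r}\pi_{r-s}\, I_s(\bar a_s). \] Define the $t\times t$ matrix $\Lambda^e$ by $\Lambda^e(r,s)=g_{r-s}e^{\beta_0+\beta_A a_s}$ for $s<r$ and $0$ otherwise; the $t\times T_0$ matrix $\Lambda^e_0$ with rows indexed by $r=1,\dots,t$ and columns by $s=-T_0+1,\dots,0$,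 $\Lambda^e_0(r,s)=g_{r-s}e^{\beta_0+\beta_A a_s}$; the $t\times t$ matrix $\Pi$ with $\Pi(r,s)=\pi_{r-s}\alpha_r$ for $s<r$ and $0$ otherwise; and the $t\times T_0$ matrix $\Pi_0$ with $\Pi_0(r,s)=\pi_{r-s}\alpha_r$ for $s=-T_0+1,\dots,0$. Then \[ \mathbb{E}[I_t(\bar a_t)]=\big[(\mathrm{id}-\Lambda^e)^{-1}\Lambda^e_0\,\bar I_0\big]_t,\qquad \mathbb{E}[Y_t(\bar a_t)]=\big[\{\Pi(\mathrm{id}-\Lambda^e)^{-1}\Lambda^e_0+\Pi_0\}\,\bar I_0\big]_t, \] where $[v]_t$ denotes the $t$-th (last) entry of the vector $v$. The same formulas hold for the multiplicative model, in which the infection equation is replaced by \[ \mathbb{E}\big[I_r(\bar a_r)\,\big|\,I_s(\bar a_s),\,s<r;\ Y_s(\bar a_s),\,s<r\big]=R(\bar a_r,\beta)\sum_{s<r} g_{r-s}\, I_s(\bar a_s),\qquad R(\bar a_r,\beta)=\frac{K}{1+\exp(\beta_0+\beta_A a_r)} \] for a constant $K>0$, with $\Lambda^e,\Lambda^e_0$ replaced respectively by $\Lambda^m$, $\Lambda^m_0$ defined by $\Lambda^m(r,s)=g_{r-s}R(\bar a_r,\beta)$ for $s<r$ (and $0$ otherwise) and $\Lambda^m_0(r,s)=g_{r-s}R(\bar a_r,\beta)$ for $s=-T_0+1,\dots,0$.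
   Context: This concerns the semi-mechanistic (Hawkes-type) epidemic model: $I_t$ are (unobserved) infections, $Y_t$ observed outcomes (e.g. deaths), $A_t$ an intervention, $g$ the generation-interval distribution and $\pi$ the infection-to-outcome delay distribution, $\alpha_t$ the ascertainment rate and $R$ the reproduction number. The counterfactual $I_t(\bar a_t)$ (resp. $Y_t(\bar a_t)$) is the value $I_t$ (resp. $Y_t$) would take if the intervention history $(A_s)_{s\le t}$ were set to $\bar a_t=(a_s)_{s\le t}$; under this intervention the model equations above hold with $A_s$ replaced by the fixed values $a_s$. $\mathrm{id}$ denotes the $t\times t$ identity matrix (note $\Lambda^e,\Lambda^m$ are strictly lower triangular so $\mathrm{id}-\Lambda$ is invertible). *)

From HB Require Import structures.
From mathcomp Require Import all_boot all_order all_algebra.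
From mathcomp Require Import all_classical all_reals all_analysis.
Set Implicit Arguments. Unset Strict Implicit. Unset Printing Implicit Defensive.
Import Order.TTheory GRing.Theory Num.Theory.
Local Open Scope classical_set_scope.
Local Open Scope ring_scope.

Section defs.
Context {d : measure_display} {T : measurableType d} {R : realType}.

Definition gen_sigma (J : Type) (S : set J) (X : J -> T -> R) : set (set T) :=
  <<s \bigcup_(i in S) preimage_set_system setT (X i) measurable >>.

Definition is_cond_exp (P : probability T R) (G : set (set T)) (X Z : T -> R) :=
  (forall B : set R, measurable B -> G (Z @^-1` B)) /\
  (forall A, G A -> (\int[P]_(w in A) (X w)%:E = \int[P]_(w in A) (Z w)%:E)%E).

Definition IY (I Y : int -> T -> R) (z : int + int) : T -> R :=
  match z with inl s => I s | inr s => Y s end.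

Definition hist_I (I Y : int -> T -> R) (r : int) : set (set T) :=
  gen_sigma ([set inl s | s in [set s : int | s < r]] `|`
             [set inr s | s in [set s : int | 1 <= s < r]]) (IY I Y).

Definition hist_Y (I Y : int -> T -> R) (r : int) : set (set T) :=
  gen_sigma ([set inl s | s in [set s : int | s <= r]] `|`
             [set inr s | s in [set s : int | 1 <= s < r]]) (IY I Y).
End defs.

(* sum over s < r (s : int) of F s, for a summand vanishing for s <= -T0:
   s ranges over -T0+1, ..., r-1, i.e. s = k - T0 + 1 with k < T0 + r - 1 *)
Definition lagsum {R : realType} (T0 r : nat) (F : int -> R) : R :=
  \sum_(k < T0 + r.-1) F (k%:Z - T0%:Z + 1).

Definition lag (r s : int) : nat := `|r - s|%N.

Definition c_exp {R : realType} (b0 bA : R) (a : int -> R) (r s : int) : R :=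
  expR (b0 + bA * a s).
Definition Rmult {R : realType} (K b0 bA : R) (a : int -> R) (r : int) : R :=
  K / (1 + expR (b0 + bA * a r)).
Definition c_mult {R : realType} (K b0 bA : R) (a : int -> R) (r s : int) : R :=
  Rmult K b0 bA a r.

(* Matrices; row i : 'I_t is time r = i+1; column j : 'I_t is time s = j+1;
   column j : 'I_T0 is time s = j - T0 + 1. *)
Definition Lam {R : realType} (t : nat) (c : int -> int -> R) (g : nat -> R)
  : 'M[R]_t :=
  \matrix_(i, j) if (j < i)%N then g (lag i.+1 j.+1) * c i.+1 j.+1 else 0.
Definition Lam0 {R : realType} (t T0 : nat) (c : int -> int -> R) (g : nat -> R)
  : 'M[R]_(t, T0) :=
  \matrix_(i, j) (g (lag i.+1 (j%:Z - T0%:Z + 1)) * c i.+1 (j%:Z - T0%:Z + 1)).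
Definition PiM {R : realType} (t : nat) (alpha : nat -> R) (pi : nat -> R)
  : 'M[R]_t :=
  \matrix_(i, j) if (j < i)%N then pi (lag i.+1 j.+1) * alpha i.+1 else 0.
Definition PiM0 {R : realType} (t T0 : nat) (alpha : nat -> R) (pi : nat -> R)
  : 'M[R]_(t, T0) :=
  \matrix_(i, j) (pi (lag i.+1 (j%:Z - T0%:Z + 1)) * alpha i.+1).
Definition Ibar0 {R : realType} (T0 : nat) (I0 : int -> R) : 'cV[R]_T0 :=
  \col_j I0 (j%:Z - T0%:Z + 1).

Definition cf_model {d : measure_display} {T : measurableType d} {R : realType}
  (P : probability T R) (T0 t : nat) (c : int -> int -> R) (g pi : nat -> R)
  (alpha : nat -> R) (I0 : int -> R) (I Y : int -> T -> R) : Prop :=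
  [/\ (forall s : int, s <= - T0%:Z -> I s = fun _ => 0),
      (forall s : int, - T0%:Z < s <= 0 -> I s = fun _ => I0 s),
      (forall r : nat, (1 <= r <= t)%N ->
          P.-integrable setT (EFin \o I r) /\ P.-integrable setT (EFin \o Y r)),
      (forall r : nat, (1 <= r <= t)%N ->
          is_cond_exp P (hist_I I Y r) (I r)
            (fun w => lagsum T0 r (fun s => c r s * g (lag r s) * I s w)))
    & (forall r : nat, (1 <= r <= t)%N ->
          is_cond_exp P (hist_Y I Y r) (Y r)
            (fun w => alpha r * lagsum T0 r (fun s => pi (lag r s) * I s w)))].

(* Conclusion: the two expectation formulas, [v]_t = entry at row i with i+1 = t *)
Definition cf_conclusion {d : measure_display} {T : measurableType d} {R : realType}
  (P : probability T R) (T0 t : nat) (c : int -> int -> R) (g pi : nat -> R)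
  (alpha : nat -> R) (I0 : int -> R) (I Y : int -> T -> R) : Prop :=
  forall i : 'I_t, i.+1 = t ->
    ('E_P[I t] = ((invmx (1%:M - Lam t c g) *m Lam0 t T0 c g *m Ibar0 T0 I0) i 0)%:E
    /\ 'E_P[Y t] = (((PiM t alpha pi *m invmx (1%:M - Lam t c g) *m Lam0 t T0 c g
                       + PiM0 t T0 alpha pi) *m Ibar0 T0 I0) i 0)%:E)%E.

(* Taking expectations in both conditional-mean equations (the tower property
   applied to the sure event) turns them into deterministic equations for the
   means m_r = E[I_r]: m_r = sum_(s<r) Lambda(r,s) m_s for 1 <= r <= t, with m
   equal to the seeds for r <= 0.  In matrix form (id - Lambda) m = Lambda_0 Ibar_0,
   and id - Lambda is unitriangular, hence invertible.  The outcome means are then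
   Pi m + Pi_0 Ibar_0.  Nothing depends on the form of the rate c(r,s), so the
   exponential and the multiplicative models are two instances. *)

From HB Require Import structures.
From mathcomp Require Import all_boot all_order all_algebra.
From mathcomp Require Import all_classical all_reals all_analysis.
From mathcomp Require Import zify.
Set Implicit Arguments. Unset Strict Implicit. Unset Printing Implicit Defensive.
Import Order.TTheory GRing.Theory Num.Theory.
Local Open Scope ring_scope.

Lemma unitmx_1_sub_strictly_lower (R : comUnitRingType) (n : nat) (A : 'M[R]_n) :
  (forall i j : 'I_n, (i <= j)%N -> A i j = 0) -> (1%:M - A) \in unitmx.
Proof.
move=> A_lower; rewrite unitmxE det_trig; last first.
  apply/is_trig_mxP => i j lt_ij; rewrite !mxE (A_lower i j (ltnW lt_ij)).
  have /negPf-> : i != j by rewrite neq_ltn lt_ij.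
  by rewrite subr0.
by rewrite big1 ?unitr1 // => i _; rewrite !mxE eqxx A_lower // subr0.
Qed.

Lemma big_ord_ltn_mkcond (R : nmodType) (n m : nat) (F : nat -> R) : (m <= n)%N ->
  \sum_(j < n) (if (j < m)%N then F j else 0) = \sum_(j < m) F j.
Proof. by move=> le_mn; rewrite (big_ord_widen n F le_mn) [RHS]big_mkcond. Qed.

Section MeanRecursion.
Variables (R : realType) (T0 t : nat) (c : int -> int -> R) (g : nat -> R).
Variables (I0 m : int -> R).

Hypothesis m_seed : forall s : int, - T0%:Z < s <= 0 -> m s = I0 s.
Hypothesis m_rec : forall r : nat, (1 <= r <= t)%N ->
  m r = lagsum T0 r (fun s => c r s * g (lag r s) * m s).

Lemma lagsum_seed_past (r : nat) (F : int -> R) :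
  lagsum T0 r.+1 F = \sum_(j < T0) F (j%:Z - T0%:Z + 1) + \sum_(j < r) F j.+1.
Proof.
rewrite /lagsum big_split_ord /=; congr (_ + _).
by apply: eq_bigr => j _ /=; congr F; lia.
Qed.

Lemma seed_sum_Ibar0 (F : int -> R) :
  \sum_(j < T0) F (j%:Z - T0%:Z + 1) * m (j%:Z - T0%:Z + 1)
  = \sum_(j < T0) F (j%:Z - T0%:Z + 1) * Ibar0 T0 I0 j 0.
Proof. by apply: eq_bigr => j _; rewrite mxE m_seed //; have := ltn_ord j; lia. Qed.

Lemma unitmx_1_sub_Lam : (1%:M - Lam t c g) \in unitmx.
Proof. by apply: unitmx_1_sub_strictly_lower => i j le_ij; rewrite mxE ltnNge le_ij. Qed.

Let mcol : 'cV[R]_t := \col_i m i.+1.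

Lemma mean_recursion_mx : (1%:M - Lam t c g) *m mcol = Lam0 t T0 c g *m Ibar0 T0 I0.
Proof.
apply/matrixP => i k; rewrite (ord1 k) mulmxBl mul1mx !mxE.
rewrite m_rec; last by have := ltn_ord i; lia.
pose F (j : nat) := c i.+1 j.+1 * g (lag i.+1 j.+1) * m j.+1.
rewrite lagsum_seed_past -(big_ord_ltn_mkcond F (ltnW (ltn_ord i))).
have -> : \sum_j Lam t c g i j * mcol j 0 = \sum_(j < t) (if (j < i)%N then F j else 0).
  by apply: eq_bigr => j _; rewrite !mxE; case: ifP; rewrite ?mul0r // (mulrC (g _)).
rewrite addrK (seed_sum_Ibar0 (fun s => c i.+1 s * g (lag i.+1 s))).
by apply: eq_bigr => j _; rewrite !mxE (mulrC (g _)).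
Qed.

Lemma mean_col_eq : mcol = invmx (1%:M - Lam t c g) *m Lam0 t T0 c g *m Ibar0 T0 I0.
Proof. by rewrite -mulmxA -mean_recursion_mx mulKmx // unitmx_1_sub_Lam. Qed.

Lemma mean_eq (i : 'I_t) :
  m i.+1 = (invmx (1%:M - Lam t c g) *m Lam0 t T0 c g *m Ibar0 T0 I0) i 0.
Proof. by rewrite -mean_col_eq mxE. Qed.

Lemma outcome_mean_eq (alpha pi : nat -> R) (i : 'I_t) :
  alpha i.+1 * lagsum T0 i.+1 (fun s => pi (lag i.+1 s) * m s)
  = ((PiM t alpha pi *m invmx (1%:M - Lam t c g) *m Lam0 t T0 c g
       + PiM0 t T0 alpha pi) *m Ibar0 T0 I0) i 0.
Proof.
rewrite mulmxDl -!mulmxA [invmx _ *m _]mulmxA -mean_col_eq !mxE.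
pose F (j : nat) := alpha i.+1 * (pi (lag i.+1 j.+1) * m j.+1).
rewrite lagsum_seed_past mulrDr addrC 2!mulr_sumr.
rewrite -(big_ord_ltn_mkcond F (ltnW (ltn_ord i))).
congr (_ + _).
  under eq_bigr do rewrite mulrA.
  rewrite (seed_sum_Ibar0 (fun s => alpha i.+1 * pi (lag i.+1 s))).
  by apply: eq_bigr => j _; rewrite !mxE (mulrC (pi _)).
apply: eq_bigr => j _; rewrite !mxE.
by case: ifP; rewrite ?mul0r // /F mulrA (mulrC (pi _)).
Qed.
End MeanRecursion.

Lemma gen_sigmaT {d : measure_display} {T : measurableType d} {R : realType}
  {J : Type} {S : set J} {X : J -> T -> R} : gen_sigma S X setT.
Proof. by rewrite -(setD0 setT); apply: sigma_algebraCD; apply: sigma_algebra0. Qed.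

Lemma expectation_cond_exp {d : measure_display} {T : measurableType d} {R : realType}
  (P : probability T R) (G : set (set T)) (X Z : T -> R) :
  is_cond_exp P G X Z -> G setT -> 'E_P[X]%E = 'E_P[Z]%E.
Proof. by case=> _ XZ GT; rewrite unlock XZ. Qed.

Section CounterfactualMeans.
Variables (d : measure_display) (T : measurableType d) (R : realType).
Variables (P : probability T R) (T0 t : nat) (c : int -> int -> R).
Variables (g pi alpha : nat -> R) (I0 : int -> R) (I Y : int -> T -> R).

Hypothesis model : cf_model P T0 t c g pi alpha I0 I Y.

Let mean (s : int) : R := fine 'E_P[I s].

Lemma integrable_I (s : int) : - T0%:Z < s <= t%:Z -> P.-integrable setT (EFin \o I s).
Proof.
case: model => _ I_seed I_integrable _ _ s_range.
have [s_le0|s_gt0] := lerP s 0.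
  by rewrite I_seed; [exact: finite_measure_integrable_cst | lia].
have -> : s = `|s|%N by lia.
by apply: (proj1 (I_integrable _ _)); lia.
Qed.

Lemma expectation_I (s : int) : - T0%:Z < s <= t%:Z -> 'E_P[I s]%E = (mean s)%:E.
Proof. by move=> s_range; rewrite fineK // unlock integrable_fin_num // integrable_I. Qed.

Lemma mean_seed (s : int) : - T0%:Z < s <= 0 -> mean s = I0 s.
Proof.
case: model => _ I_seed _ _ _ s_range.
by rewrite /mean I_seed // -[fun=> _]/(cst (I0 s)) expectation_cst.
Qed.

Lemma expectation_lagsum (r : nat) (a : R) (coef : int -> R) : (1 <= r <= t)%N ->
  'E_P[fun w => (a * lagsum T0 r (fun s => coef s * I s w))%R]%E
  = (a * lagsum T0 r (fun s => coef s * mean s))%:E.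
Proof.
move=> r_range; rewrite unlock /lagsum.
under eq_integral do rewrite mulr_sumr -sumEFin.
have I_range (k : 'I_(T0 + r.-1)) : - T0%:Z < k%:Z - T0%:Z + 1 <= t%:Z.
  by have := ltn_ord k; lia.
rewrite integral_sum //; last first.
  move=> k; under eq_fun do rewrite mulrA EFinM.
  by apply: integrableZl => //; apply: integrable_I.
rewrite mulr_sumr -sumEFin; apply: eq_bigr => k _.
under eq_integral do rewrite mulrA EFinM.
rewrite integralZl ?integrable_I // !EFinM -expectation_I //.
by rewrite unlock muleA.
Qed.

Lemma mean_rec (r : nat) : (1 <= r <= t)%N ->
  mean r = lagsum T0 r (fun s => c r s * g (lag r s) * mean s).
Proof.
case: model => _ _ _ I_cond _ r_range; apply: EFin_inj.
rewrite -expectation_I; last by lia.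
rewrite (expectation_cond_exp (I_cond r r_range) gen_sigmaT).
rewrite -[lagsum _ _ _]mul1r -expectation_lagsum //.
by congr 'E_P[_]%E; apply/funext => w; rewrite mul1r.
Qed.

Lemma expectation_Y (r : nat) : (1 <= r <= t)%N ->
  'E_P[Y r]%E = (alpha r * lagsum T0 r (fun s => pi (lag r s) * mean s))%:E.
Proof.
case: model => _ _ _ _ Y_cond r_range.
by rewrite (expectation_cond_exp (Y_cond r r_range) gen_sigmaT) expectation_lagsum.
Qed.

Lemma cf_model_conclusion : cf_conclusion P T0 t c g pi alpha I0 I Y.
Proof.
move=> i i_last.
have := mean_eq mean_seed mean_rec i; have := outcome_mean_eq mean_seed mean_rec alpha pi i.
rewrite i_last => <- <-; split; first by rewrite expectation_I //; lia.
by rewrite expectation_Y //; lia.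
Qed.
End CounterfactualMeans.

Theorem theorem1 (d : measure_display) (T : measurableType d) (R : realType)
  (P : probability T R) (T0 t : nat) (b0 bA : R) (g pi alpha : nat -> R)
  (a : int -> R) (I0 : int -> R) :
  (1 <= T0)%N -> (1 <= t)%N ->
  (forall k : nat, (0 < k)%N -> 0 <= g k) ->
  (forall k : nat, (0 < k)%N -> 0 <= pi k) ->
  (* exponential model *)
  (forall I Y : int -> T -> R,
     cf_model P T0 t (c_exp b0 bA a) g pi alpha I0 I Y ->
     cf_conclusion P T0 t (c_exp b0 bA a) g pi alpha I0 I Y)
  /\
  (* multiplicative model *)
  (forall K : R, 0 < K ->
   forall I Y : int -> T -> R,
     cf_model P T0 t (c_mult K b0 bA a) g pi alpha I0 I Y ->
     cf_conclusion P T0 t (c_mult K b0 bA a) g pi alpha I0 I Y).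
Proof.
move=> _ _ _ _; split; first exact: cf_model_conclusion.
by move=> K _; apply: cf_model_conclusion.
Qed.
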